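(* Let $d,m_0,n,m$ be nonnegative integers with $n\ge1$, $m\ge1$. Then $\mathcal{L}(d,m_0,n,m)$ is a quasi-homogeneous $(-1)$-class if and only if $(d,m_0,n,m)$ is one of: (a) $(2,0,5,1)$ or $(1,1,1,1)$; (b) $(e,e-1,2e,1)$ with $e\ge1$; (c) $\left(\frac{x+y+3m}{2},\frac{x-y+m}{2},\frac{x+2y-1}{m}+4,m\right)$ for some $m\ge2$ and integers $x,y\ge1$ with $xy=(m-1)(2m+1)$, $x+m\ge y$, $x-y\equiv m\pmod 2$, and $m\mid x+2y-1$.
   Context: $\mathcal{L}(d,m_0,n,m)$ denotes the class (linear system) of plane curves of degree $d$ with multiplicity $m_0$ at a general point $p_0$ and $m$ at general points $p_1,\dots,p_n$. Its self-intersection is $\mathcal{L}^2=d^2-m_0^2-nm^2$ and its genus $g$ is defined by $2g-2=d(d-3)-m_0(m_0-1)-nm(m-1)$. A quasi-homogeneous $(-1)$-class is such an $\mathcal{L}(d,m_0,n,m)$ with $\mathcal{L}^2=-1$ and $g=0$ (equivalently $d^2-m_0^2-nm^2=-1$ and $3d-m_0-nm=1$). *)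

From Stdlib Require Import ZArith Lia.
Open Scope Z_scope.

Definition self_int (d m0 n m : Z) : Z := d^2 - m0^2 - n * m^2.

Definition two_g_minus_two (d m0 n m : Z) : Z :=
  d * (d - 3) - m0 * (m0 - 1) - n * m * (m - 1).

(* Genus g, defined by 2g - 2 = two_g_minus_two (g may be a half-integer
   in general; we only need the predicate "g = 0"). *)
Definition genus_zero (d m0 n m : Z) : Prop := two_g_minus_two d m0 n m = -2.

Definition qh_minus1_class (d m0 n m : Z) : Prop :=
  self_int d m0 n m = -1 /\ genus_zero d m0 n m.

(* The substitution x = d + m0 - 2m, y = d - m0 - m linearises the problem:
   given L^2 = -1, the genus condition g = 0 becomes x + 2y - 1 = (n - 4) m,
   and then L^2 = -1 becomes x y = (m - 1)(2m + 1).  For m = 1 one of the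
   factors vanishes, which yields (a) and (b).  For m >= 2 the factors are
   positive: if both were negative, n >= 1 bounds |x| + 2|y| by 3m - 1, and
   AM-GM gives 8 (m - 1)(2m + 1) <= (3m - 1)^2, forcing m <= 1.  Inverting
   the substitution yields (c). *)
From Stdlib Require Import ZArith Lia.
Open Scope Z_scope.

Lemma qh_minus1_class_iff_xy (d m0 n m : Z) :
  qh_minus1_class d m0 n m <->
  (d + m0 - 2 * m) * (d - m0 - m) = (m - 1) * (2 * m + 1) /\
  (d + m0 - 2 * m) + 2 * (d - m0 - m) - 1 = (n - 4) * m.
Proof.
  unfold qh_minus1_class, self_int, genus_zero, two_g_minus_two.
  assert (genus_eq : d * (d - 3) - m0 * (m0 - 1) - n * m * (m - 1) + 2
    = (d ^ 2 - m0 ^ 2 - n * m ^ 2 + 1) - (3 * d - m0 - n * m - 1)) by ring.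
  assert (self_int_eq : d ^ 2 - m0 ^ 2 - n * m ^ 2 + 1
    = ((d + m0 - 2 * m) * (d - m0 - m) - (m - 1) * (2 * m + 1))
      + m * (3 * d - m0 - n * m - 1)) by ring.
  split.
  - intros [H1 H2].
    assert (Hlin : 3 * d - m0 - n * m - 1 = 0) by lia.
    split; nia.
  - intros [Hprod Hlin].
    assert (H1 : d ^ 2 - m0 ^ 2 - n * m ^ 2 + 1 = 0) by nia.
    split; lia.
Qed.

Lemma qh_classification_m1 (d m0 n : Z) (hd : 0 <= d) (hm0 : 0 <= m0) (hn : 1 <= n) :
  qh_minus1_class d m0 n 1 <->
  ((d, m0, n, 1) = (2, 0, 5, 1) \/ (d, m0, n, 1) = (1, 1, 1, 1)) \/
  (exists e, 1 <= e /\ (d, m0, n, 1) = (e, e - 1, 2 * e, 1)).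
Proof.
  rewrite qh_minus1_class_iff_xy; split.
  - intros [Hprod Hlin]; apply Z.mul_eq_0 in Hprod as [Hx | Hy].
    + left; assert (d = 2 /\ m0 = 0 \/ d = 1 /\ m0 = 1) as [[-> ->] | [-> ->]] by lia.
      * left; repeat f_equal; lia.
      * right; repeat f_equal; lia.
    + right; exists d; split; [lia |]; repeat f_equal; lia.
  - intros [[H | H] | [e [He H]]]; rewrite !pair_equal_spec in H; destruct H as [[[-> ->] ->] _]; split; ring.
Qed.

Lemma factors_pos_of_mul_eq (x y m : Z) :
  2 <= m -> x * y = (m - 1) * (2 * m + 1) -> 1 - 3 * m <= x + 2 * y ->
  1 <= x /\ 1 <= y.
Proof.
  intros Hm Hxy Hlow.
  assert (Hprod_pos : 0 < x * y) by nia.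
  destruct (Z_lt_le_dec 0 x) as [Hx | Hx].
  - split; [lia |].
    apply Z.mul_pos_cancel_l in Hprod_pos; lia.
  - exfalso.
    assert (Hy : y < 0) by nia.
    assert (am_gm : 8 * (x * y) <= (x + 2 * y) ^ 2)
      by (pose proof (Z.square_nonneg (x - 2 * y)); nia).
    assert (bound : (x + 2 * y) ^ 2 <= (3 * m - 1) ^ 2) by nia.
    nia.
Qed.

Lemma even_add_of_mod2_eq (a b : Z) :
  a mod 2 = b mod 2 -> exists k, a + b = k * 2.
Proof.
  intros Hab; exists (a / 2 + b / 2 + b mod 2).
  pose proof (Z_div_mod_eq_full a 2); pose proof (Z_div_mod_eq_full b 2); lia.
Qed.

Lemma qh_classification_m_ge2 (d m0 n m : Z)
  (hm0 : 0 <= m0) (hn : 1 <= n) (hm : 2 <= m) :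
  qh_minus1_class d m0 n m <->
  exists x y : Z,
    1 <= x /\ 1 <= y /\ x * y = (m - 1) * (2 * m + 1) /\ y <= x + m /\
    (x - y) mod 2 = m mod 2 /\ (m | x + 2 * y - 1) /\
    (d, m0, n, m) = ((x + y + 3 * m) / 2, (x - y + m) / 2,
                     (x + 2 * y - 1) / m + 4, m).
Proof.
  rewrite qh_minus1_class_iff_xy; split.
  - intros [Hprod Hlin].
    destruct (factors_pos_of_mul_eq _ _ m hm Hprod ltac:(nia)) as [Hx Hy].
    exists (d + m0 - 2 * m), (d - m0 - m).
    do 4 (split; [lia |]); split.
    { replace (d + m0 - 2 * m - (d - m0 - m)) with (m + (m0 - m) * 2) by ring.
      apply Z_mod_plus_full. }
    split; [exists (n - 4); lia |].
    replace (d + m0 - 2 * m + (d - m0 - m) + 3 * m) with (d * 2) by ring.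
    replace (d + m0 - 2 * m - (d - m0 - m) + m) with (m0 * 2) by ring.
    rewrite Hlin, !Z.div_mul by lia.
    repeat f_equal; ring.
  - intros (x & y & _ & _ & Hxy & _ & Hpar & [j Hj] & H).
    destruct (even_add_of_mod2_eq _ _ Hpar) as [k Hk].
    replace (x + y + 3 * m) with ((k + y + m) * 2) in H by lia.
    rewrite Hk, Hj, !Z.div_mul in H by lia.
    injection H; intros; subst.
    replace x with (2 * k + y - m) in * by lia.
    split; nia.
Qed.

Theorem proposition5p1 (d m0 n m : Z)
  (hd : 0 <= d) (hm0 : 0 <= m0) (hn : 1 <= n) (hm : 1 <= m) :
  qh_minus1_class d m0 n m <->
  ( ((d, m0, n, m) = (2, 0, 5, 1) \/ (d, m0, n, m) = (1, 1, 1, 1))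
  \/ (exists e, 1 <= e /\ (d, m0, n, m) = (e, e - 1, 2 * e, 1))
  \/ (2 <= m /\ exists x y : Z,
        1 <= x /\ 1 <= y /\ x * y = (m - 1) * (2 * m + 1) /\ y <= x + m /\
        (x - y) mod 2 = m mod 2 /\ (m | x + 2 * y - 1) /\
        (d, m0, n, m) = ((x + y + 3 * m) / 2, (x - y + m) / 2,
                         (x + 2 * y - 1) / m + 4, m)) ).
Proof.
  destruct (Z.eq_dec m 1) as [-> | Hm1].
  - rewrite qh_classification_m1 by assumption.
    split; [tauto |]; intros [H | [H | [H _]]]; tauto || lia.
  - rewrite qh_classification_m_ge2 by lia.
    split; [intros H; right; right; split; [lia | exact H] |].
    intros [[H | H] | [[e [_ H]] | [_ H]]]; try (injection H; lia).
    exact H.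
Qed.
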